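(* Let $n\ge1$, let $p(x_1,\dots,x_n)=\prod_{i<j}(x_i+x_j)$, and let $\Gamma$ be the $n\times n$ matrix with entries $\Gamma_{ij}=B(\phi_i,\phi_j)$, $0\le i,j\le n-1$. Then $\det\Gamma=c\,p^2x_1\cdots x_n$ for some non-zero constant $c\in\mathbb C$.
   Context: $U(\mathfrak h_n)$ is the associative superalgebra generated by odd elements $\xi_1,\dots,\xi_n$ subject to $\xi_i\xi_j+\xi_j\xi_i=0$ for $i\neq j$; $x_i=\xi_i^2$ are central. Let $W_1$ be the free $\mathbb C[x_1,\dots,x_n]$-submodule of $U(\mathfrak h_n)$ with basis $\xi_1,\dots,\xi_n$, with the $\mathbb C[x_1,\dots,x_n]$-valued symmetric bilinear form $B(a,b)=[a,b]=ab+ba$. Let $T$ be the $\mathbb C[x_1,\dots,x_n]$-linear endomorphism of $W_1$ with $T(\xi_j)=\sum_i t_{ij}\xi_i$, where $t_{ii}=0$, $t_{ij}=x_j$ for $i<j$, $t_{ij}=-x_j$ for $i>j$. Set $\phi_0=\sum_{i}\xi_i$ and $\phi_k=T^k(\phi_0)$. *)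

From HB Require Import structures.
From mathcomp Require Import all_boot all_order all_algebra.
From mathcomp Require Import mpoly.
Set Implicit Arguments. Unset Strict Implicit. Unset Printing Implicit Defensive.
Import Order.TTheory GRing.Theory Num.Theory.
Local Open Scope ring_scope.

(* Coefficients: C[x_1,...,x_n] is {mpoly C[n]}; x_{i+1} is 'X_i (i : 'I_n).
   Elements of W_1 are represented by their coordinate column vectors
   in the basis xi_1,...,xi_n. *)

(* Gram matrix of B on the basis: B(xi_i, xi_j) = xi_i xi_j + xi_j xi_i,
   which equals 2 x_i if i = j (xi_i^2 = x_i) and 0 if i <> j (anticommutation). *)
Definition gramB (C : fieldType) (n : nat) : 'M[{mpoly C[n]}]_n :=
  \matrix_(i < n, j < n) (if i == j then 2%:R * 'X_i else 0).

Definition Bform (C : fieldType) (n : nat) (a b : 'cV[{mpoly C[n]}]_n)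
  : {mpoly C[n]} :=
  \sum_(i < n) \sum_(j < n) a i 0 * b j 0 * gramB C n i j.

(* Matrix of T in the basis xi: column j holds the coordinates of T(xi_j). *)
Definition Tmat (C : fieldType) (n : nat) : 'M[{mpoly C[n]}]_n :=
  \matrix_(i < n, j < n)
    (if (i < j)%N then 'X_j else if (j < i)%N then - 'X_j else 0).

Definition phi (C : fieldType) (n k : nat) : 'cV[{mpoly C[n]}]_n :=
  iter k (mulmx (Tmat C n)) (const_mx 1).

Definition Gamma (C : fieldType) (n : nat) : 'M[{mpoly C[n]}]_n :=
  \matrix_(i < n, j < n) Bform (phi C n i) (phi C n j).

Definition ppoly (C : fieldType) (n : nat) : {mpoly C[n]} :=
  \prod_(i < n) \prod_(j < n | (i < j)%N) ('X_i + 'X_j).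

From Pilot Require Import Defs.
From HB Require Import structures.
From mathcomp Require Import all_boot all_order all_algebra.
From mathcomp Require Import mpoly.
From mathcomp Require Import fingroup perm ring zify.
Import Order.TTheory GRing.Theory Num.Theory.
Local Open Scope ring_scope.
Set Implicit Arguments. Unset Strict Implicit. Unset Printing Implicit Defensive.

(* With G = diag(2 x_i) the Gram matrix of B and K the Krylov matrix of T
   with columns phi_0, ..., phi_(n-1), we have Gamma = K^T G K, so it suffices
   to show det K = +-p.  Put
     v_k(t) = prod_(i<k) (t - x_i) * prod_(i>k) (t + x_i).
   Since (t - x_k) v_k = (t + x_(k+1)) v_(k+1), the defect
   t v_k - sum_b T_kb v_b does not depend on k: (t - T) v = chi (1,...,1) for
   a monic chi of degree n.  Reading this identity coefficientwise writes the
   coefficient matrix V of v as K H, with H a Hankel matrix in the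
   coefficients of chi that has 1 on its antidiagonal and 0 below it, so
   det H = +-1.  Finally V times the Vandermonde matrix of the -x_m is the
   triangular matrix (v_k(-x_m)), whence det V = p. *)

Definition hankel_mx (R : comNzRingType) (n : nat) (c : {poly R}) : 'M[R]_n :=
  \matrix_(i < n, j < n) (if (i + j < n)%N then c`_(i + j + 1) else 0).

Lemma det_hankel_mx_sqr (R : comNzRingType) (n : nat) (c : {poly R}) :
  c`_n = 1 -> \det (hankel_mx n c) ^+ 2 = 1.
Proof.
move=> c_n; set s := perm (@rev_ord_inj n).
have trig : is_trig_mx (row_perm s (hankel_mx n c)).
  apply/is_trig_mxP => i j ij; rewrite !mxE permE /=.
  by have := ltn_ord i; case: ifP => //; lia.
have := det_trig trig; rewrite big1 => [|i _]; last first.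
  rewrite !mxE permE /=; have := ltn_ord i.
  by case: ifPn => [_ ?|]; [rewrite -c_n; congr (_`_ _); lia | lia].
rewrite row_permE det_mulmx det_perm => E.
by rewrite -[LHS]mul1r -{1}(sqrr_sign R (odd_perm s)) -exprMn E expr1n.
Qed.

Section Krylov.

Variables (R : comNzRingType) (n : nat) (x : 'I_n -> R).

(* Tmat, phi, gramB, Bform and Gamma of Defs, with the variables 'X_i
   replaced by arbitrary ring elements x i. *)

Definition tmx : 'M[R]_n :=
  \matrix_(i < n, j < n) (if (i < j)%N then x j else if (j < i)%N then - x j else 0).

Definition krylov (k : nat) : 'cV[R]_n := iter k (mulmx tmx) (const_mx 1).

Definition krylov_mx : 'M[R]_n := \matrix_(a < n, j < n) krylov j a 0.

Definition gram_mx : 'M[R]_n :=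
  \matrix_(i < n, j < n) (if i == j then 2%:R * x i else 0).

Definition gram_form (a b : 'cV[R]_n) : R :=
  \sum_(i < n) \sum_(j < n) a i 0 * b j 0 * gram_mx i j.

Definition gamma_mx : 'M[R]_n :=
  \matrix_(i < n, j < n) gram_form (krylov i) (krylov j).

Lemma gamma_mxE : gamma_mx = krylov_mx^T *m gram_mx *m krylov_mx.
Proof.
apply/matrixP => i j; rewrite !mxE /gram_form.
under [RHS]eq_bigr do rewrite mxE big_distrl.
rewrite exchange_big; apply: eq_bigr => a _; apply: eq_bigr => b _.
by rewrite !mxE mulrAC.
Qed.

Lemma det_gram_mx : \det gram_mx = 2%:R ^+ n * \prod_(i < n) x i.
Proof.
have trig : is_trig_mx gram_mx.
  by apply/is_trig_mxP => i j ij; rewrite mxE -(inj_eq val_inj) /= ltn_eqF.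
rewrite det_trig // (eq_bigr (fun i => 2%:R * x i)) => [|i _]; last first.
  by rewrite mxE eqxx.
by rewrite big_split /= prodr_const card_ord.
Qed.

Definition vroot (k i : 'I_n) : R := if (i < k)%N then x i else - x i.

Definition vpoly (k : 'I_n) : {poly R} := \prod_(i < n | i != k) ('X - (vroot k i)%:P).

Definition vpoly_mx : 'M[R]_n := \matrix_(k < n, j < n) (vpoly k)`_j.

Definition vdefect (k : 'I_n) : {poly R} :=
  'X * vpoly k - \sum_(b < n) (tmx k b)%:P * vpoly b.

Lemma size_vpoly (k : 'I_n) : size (vpoly k) = n.
Proof.
rewrite /vpoly -big_filter size_prod_XsubC size_filter.
have := cardC1 k; rewrite card_ord cardE /enum_mem size_filter => ->.
by case: n k => [[]|].
Qed.

Lemma lead_coef_vpoly (k : 'I_n) : (vpoly k)`_n.-1 = 1.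
Proof.
have := lead_coef_prod_XsubC (index_enum 'I_n) (fun i => i != k) (vroot k).
by rewrite /lead_coef -/(vpoly k) size_vpoly.
Qed.

Lemma vpoly_shift (k k' : 'I_n) : k' = k.+1 :> nat ->
  ('X - (x k)%:P) * vpoly k = ('X + (x k')%:P) * vpoly k'.
Proof.
move=> kk'; transitivity (\prod_(i < n) ('X - (vroot k' i)%:P)).
  rewrite [RHS](bigD1 k) //= /vroot kk' ltnSn; congr (_ * _).
  apply: eq_bigr => i ik; have ik' : (i : nat) != k := ik.
  by rewrite /vroot ltnS [(i <= k)%N]leq_eqVlt (negbTE ik').
by rewrite (bigD1 k') //= /vroot ltnn polyCN opprK.
Qed.

Lemma tmx_shift (k k' b : 'I_n) : k' = k.+1 :> nat ->
  tmx k b = tmx k' b + (if b == k then x b else 0) + (if b == k' then x b else 0).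
Proof.
move=> kk'; rewrite !mxE -!(inj_eq val_inj) /= kk'.
case: (ltngtP b k) => [bk|kb|->].
- have bk1 : (b < k.+1)%N by apply: ltn_trans bk _.
  by rewrite ltnNge (ltnW bk1) bk1 (ltn_eqF bk1) !addr0.
- case: (ltngtP b k.+1) => [|_|_]; rewrite ?addr0 ?add0r //.
  by rewrite ltnS leqNgt kb.
- by rewrite ltnNge leqnSn ltnSn (ltn_eqF (ltnSn k)) addr0 addNr.
Qed.

Lemma vdefect_shift (k k' : 'I_n) : k' = k.+1 :> nat -> vdefect k = vdefect k'.
Proof.
move=> kk'; set S := \sum_(b < n) (tmx k' b)%:P * vpoly b.
have sum_shift : \sum_(b < n) (tmx k b)%:P * vpoly b =
    S + (x k)%:P * vpoly k + (x k')%:P * vpoly k'.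
  under eq_bigr do rewrite (tmx_shift _ kk') !polyCD !mulrDl.
  rewrite !big_split /=; congr (_ + _ + _).
    rewrite (bigD1 k) //= eqxx big1 ?addr0 // => b /negbTE->.
    by rewrite polyC0 mul0r.
  rewrite (bigD1 k') //= eqxx big1 ?addr0 // => b /negbTE->.
  by rewrite polyC0 mul0r.
rewrite /vdefect sum_shift -/S.
have -> : 'X * vpoly k - (S + (x k)%:P * vpoly k + (x k')%:P * vpoly k') =
    ('X - (x k)%:P) * vpoly k - (x k')%:P * vpoly k' - S by ring.
by rewrite (vpoly_shift kk'); ring.
Qed.

Lemma vdefect_const (k k' : 'I_n) : vdefect k = vdefect k'.
Proof.
have to_zero (j z : 'I_n) : val z = 0%N -> vdefect j = vdefect z.
  case: j => m lt_mn z0; elim: m lt_mn => [|m IH] lt_mn.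
    by congr vdefect; apply: val_inj.
  by rewrite -(IH (ltnW lt_mn)); apply/esym/vdefect_shift.
pose z : 'I_n := Ordinal (leq_ltn_trans (leq0n k) (ltn_ord k)).
by rewrite (to_zero k z) // (to_zero k' z).
Qed.

Lemma vdefect_lead (k0 : 'I_n) : (vdefect k0)`_n = 1.
Proof.
have n_gt0 : (0 < n)%N := leq_ltn_trans (leq0n k0) (ltn_ord k0).
rewrite /vdefect coefB coefXM coef_sum gtn_eqF // lead_coef_vpoly big1 ?subr0 //.
by move=> b _; rewrite coefCM nth_default ?size_vpoly ?mulr0.
Qed.

Definition vcol (j : nat) : 'cV[R]_n := \col_k (vpoly k)`_j.

Lemma vcol_rec (k0 : 'I_n) (j : nat) :
  vcol j = tmx *m vcol j.+1 + (vdefect k0)`_j.+1 *: const_mx 1.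
Proof.
apply/matrixP => k i; rewrite ord1 !mxE (vdefect_const k0 k) mulr1.
rewrite coefB coefXM coef_sum addrC /=.
have -> : \sum_(b < n) tmx k b * vcol j.+1 b 0 =
    \sum_(b < n) ((tmx k b)%:P * vpoly b)`_j.+1.
  by apply: eq_bigr => b _; rewrite coefCM /vcol !mxE.
by rewrite -addrA addNr addr0.
Qed.

Lemma vcol_krylov (k0 : 'I_n) (j : nat) : (j <= n)%N ->
  vcol j = \sum_(i < n - j) (vdefect k0)`_(i + j + 1) *: krylov i.
Proof.
suff expand d : (d <= n)%N ->
    vcol (n - d) = \sum_(i < d) (vdefect k0)`_(i + (n - d) + 1) *: krylov i.
  by move=> le_jn; rewrite -{1}(subKn le_jn) expand ?leq_subr // subKn.
elim: d => [|d IH] le_dn.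
  rewrite subn0 big_ord0; apply/matrixP => k i.
  by rewrite !mxE nth_default // size_vpoly.
rewrite (vcol_rec k0) (subnSK le_dn) IH ?(ltnW le_dn) // mulmx_sumr big_ord_recl addrC.
congr (_ + _); first by rewrite add0n addn1 (subnSK le_dn).
apply: congr_big => // i _; rewrite scalemxAr; congr (_ *m (_ *: _)); congr (_`_ _).
by rewrite /= /bump leq0n add1n; lia.
Qed.

Lemma vpoly_mx_factor (k0 : 'I_n) :
  vpoly_mx = krylov_mx *m hankel_mx n (vdefect k0).
Proof.
apply/matrixP => k j.
have := congr1 (fun M : 'cV[R]_n => M k 0) (vcol_krylov k0 (ltnW (ltn_ord j))).
rewrite !mxE => ->; rewrite summxE.
under eq_bigr do rewrite mxE.
rewrite (big_ord_widen n (fun i => (vdefect k0)`_(i + j + 1) * krylov i k 0)) ?leq_subr //.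
rewrite big_mkcond; apply: eq_bigr => i _; rewrite !mxE ltn_subRL addnC.
by case: ifP => _; rewrite ?mulr0 // mulrC.
Qed.

End Krylov.

Definition pairsum_prod (R : comNzRingType) (n : nat) (x : 'I_n -> R) : R :=
  \prod_(i < n) \prod_(j < n | (i < j)%N) (x i + x j).

Lemma prod_vpoly_diag (R : comNzRingType) (n : nat) (x : 'I_n -> R) :
  \prod_(k < n) (vpoly x k).[- x k] =
  pairsum_prod x * \prod_(i < n) \prod_(j < n | (i < j)%N) (x i - x j).
Proof.
have split_at k : (vpoly x k).[- x k] =
    \prod_(i < n | (i < k)%N) - (x i + x k) * \prod_(i < n | (k < i)%N) (x i - x k).
  rewrite horner_prod big_mkcond [X in X * _]big_mkcond [X in _ * X]big_mkcond.
  rewrite -big_split; apply: eq_bigr => i _ /=; rewrite hornerXsubC /vroot.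
  rewrite -(inj_eq val_inj) /=.
  by case: (ltngtP i k) => _; rewrite ?mulr1 ?mul1r // (opprD, opprK) addrC.
rewrite (eq_bigr _ (fun k _ => split_at k)) big_split /=.
rewrite (exchange_big_dep xpredT) //= /pairsum_prod -!big_split.
by apply: eq_bigr => i _; rewrite -!big_split; apply: eq_bigr => j _ /=; ring.
Qed.

Lemma det_vpoly_mx (R : idomainType) (n : nat) (x : 'I_n -> R) :
  injective x -> \det (vpoly_mx x) = pairsum_prod x.
Proof.
move=> x_inj; pose V := Vandermonde n (\row_m (- x m)).
have VE : vpoly_mx x *m V = \matrix_(k < n, m < n) (vpoly x k).[- x m].
  apply/matrixP => k m; rewrite !mxE (horner_coef_wide _ (eq_leq (size_vpoly x k))).
  by apply: eq_bigr => j _; rewrite !mxE.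
have trig : is_trig_mx (vpoly_mx x *m V).
  apply/is_trig_mxP => k m km; rewrite VE mxE horner_prod (bigD1 m) /=.
    by rewrite hornerXsubC /vroot ltnNge (ltnW km) /= subrr mul0r.
  by rewrite -(inj_eq val_inj) /= gtn_eqF.
have detV : \det V = \prod_(i < n) \prod_(j < n | (i < j)%N) (x i - x j).
  rewrite det_Vandermonde; apply: eq_bigr => i _; apply: eq_bigr => j _.
  by rewrite !mxE opprK addrC.
have detV_neq0 : \det V != 0.
  rewrite detV; apply/prodf_neq0 => i _; apply/prodf_neq0 => j ij.
  rewrite subr_eq0; apply/eqP => /x_inj/(congr1 val)/eqP.
  by rewrite /= ltn_eqF.
apply: (mulIf detV_neq0); rewrite -det_mulmx det_trig // detV -prod_vpoly_diag.
by apply: eq_bigr => k _; rewrite VE mxE.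
Qed.

Theorem det_gamma_mx (R : idomainType) (n : nat) (x : 'I_n -> R) :
  (0 < n)%N -> injective x ->
  \det (gamma_mx x) = 2%:R ^+ n * \prod_(i < n) x i * pairsum_prod x ^+ 2.
Proof.
move=> n_gt0 x_inj; pose k0 : 'I_n := Ordinal n_gt0.
have det_krylov_sqr : \det (krylov_mx x) ^+ 2 = pairsum_prod x ^+ 2.
  rewrite -(det_vpoly_mx x_inj) (vpoly_mx_factor x k0) det_mulmx exprMn.
  by rewrite det_hankel_mx_sqr ?mulr1 // vdefect_lead.
rewrite gamma_mxE !det_mulmx det_tr det_gram_mx -det_krylov_sqr.
ring.
Qed.

Theorem lemma3p2 (C : numClosedFieldType) (n : nat) : (1 <= n)%N ->
  exists c : C, c != 0 /\
    \det (Gamma C n) = c *: (ppoly C n ^+ 2 * \prod_(i < n) 'X_i).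
Proof.
move=> n_gt0; exists (2 ^+ n); split; first by rewrite expf_neq0 // pnatr_eq0.
have X_inj : injective (fun i : 'I_n => 'X_i : {mpoly C[n]}).
  move=> i j eq_ij; apply/eqP; apply: contraT => neq_ij.
  have := congr1 (meval (fun l => (l == i)%:R : C)) eq_ij.
  by rewrite !mevalXU eqxx eq_sym (negbTE neq_ij) => /eqP; rewrite oner_eq0.
have Gamma_generic : Gamma C n = gamma_mx (fun i => 'X_i) := erefl.
have ppoly_generic : ppoly C n = pairsum_prod (fun i => 'X_i) := erefl.
rewrite Gamma_generic ppoly_generic (det_gamma_mx n_gt0 X_inj).
rewrite -mul_mpolyC -[(2 ^+ n : C)]natrX mpolyC_nat natrX.
ring.
Qed.
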